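(* Let $G=(V,E)$ be a finite graph with adjacency matrix $A$, and suppose there exist $\boldsymbol\beta,\boldsymbol\gamma,\boldsymbol\lambda\in(0,\infty)^V$ such that every induced subgraph $H$ of $G$ has local $(\boldsymbol\beta|_{V(H)},\boldsymbol\gamma|_{V(H)},\boldsymbol\lambda|_{V(H)})$-occupancy. Let $B=\mathrm{diag}(\boldsymbol\beta)$ and $\Gamma=\mathrm{diag}(\boldsymbol\gamma)$. Then every vector $\mathbf q\in\mathbb R^V$ with $\mathbf q\ge\mathbf 0$ and $(B+\Gamma A)\mathbf q\le\mathbf 1$ lies in the independence polytope $\mathrm{ind}(G)$.
   Context: The independence polytope $\mathrm{ind}(G)\subset\mathbb R^V$ is the convex hull of the indicator vectors $\mathbf x^I\in\{0,1\}^V$ of independent sets $I$ of $G$ (including $\emptyset$). For a graph $H$ and $\boldsymbol\beta,\boldsymbol\gamma,\boldsymbol\lambda\in[0,\infty)^{V(H)}$, $H$ has local $(\boldsymbol\beta,\boldsymbol\gamma,\boldsymbol\lambda)$-occupancy if for every $u\in V(H)$, $\beta_u\Pr_{H,\boldsymbol\lambda}(u\in X)+\gamma_u\sum_{v\in N_H(u)}\Pr_{H,\boldsymbol\lambda}(v\in X)\ge1$, where $X$ is drawn from the hard-core model on $H$: $\Pr_{H,\boldsymbol\lambda}(I)\propto\prod_{v\in I}\lambda_v$ over independent sets $I$ of $H$. Vector inequalities are entrywise. *)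

From mathcomp Require Import all_boot all_order all_algebra.
From mathcomp Require Import reals.
Set Implicit Arguments. Unset Strict Implicit. Unset Printing Implicit Defensive.
Import Order.TTheory GRing.Theory Num.Theory.
Local Open Scope ring_scope.

Section Defs.
Variables (R : realType) (T : finType).

Definition simple_graph (e : rel T) : Prop :=
  (forall x, ~~ e x x) /\ (forall x y, e x y = e y x).

Definition independent (e : rel T) (I : {set T}) : bool :=
  [forall x in I, forall y in I, ~~ e x y].

Definition hc_weight (lam : T -> R) (I : {set T}) : R := \prod_(v in I) lam v.

(* Partition function of the hard-core model on the induced subgraph G[S]:
   independent sets of G[S] are the independent sets of G contained in S. *)
Definition hc_Z (e : rel T) (lam : T -> R) (S : {set T}) : R :=
  \sum_(I : {set T} | (I \subset S) && independent e I) hc_weight lam I.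

Definition hc_occ (e : rel T) (lam : T -> R) (S : {set T}) (u : T) : R :=
  (\sum_(I : {set T} | [&& I \subset S, independent e I & u \in I])
      hc_weight lam I) / hc_Z e lam S.

Definition local_occupancy (e : rel T) (beta gamma lam : T -> R)
    (S : {set T}) : Prop :=
  forall u, u \in S ->
    beta u * hc_occ e lam S u
      + gamma u * (\sum_(v in S | e u v) hc_occ e lam S v) >= 1.

Definition BGA_apply (e : rel T) (beta gamma q : T -> R) (u : T) : R :=
  beta u * q u + gamma u * (\sum_(v | e u v) q v).

(* Independence polytope: convex hull of indicator vectors of independent
   sets (including the empty set). *)
Definition in_ind_polytope (e : rel T) (q : T -> R) : Prop :=
  exists mu : {set T} -> R,
    [/\ forall I, 0 <= mu I,
        forall I, ~~ independent e I -> mu I = 0,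
        \sum_(I : {set T}) mu I = 1 &
        forall x, q x = \sum_(I : {set T} | x \in I) mu I].

End Defs.

(* Induct on the support S of q, proving the stronger claim that q >= 0 with
   (B + Gamma A) q <= s on S is a nonnegative combination of independent-set
   indicators of total weight at most s.  The hard-core marginals
   p := Pr_{G[S]}(. in X) are such a combination of weight 1, and local occupancy
   of G[S] says (B + Gamma A) p >= 1 on S.  Subtract the largest multiple d p
   fitting under q: the remainder vanishes somewhere on S, and by linearity and
   nonnegativity of B + Gamma A its value on S drops by at least d, so the
   induction hypothesis applies with s - d.  For s = 1 the missing mass is put
   on the empty set. *)
From mathcomp Require Import all_boot all_order all_algebra.
From mathcomp Require Import reals.
From mathcomp Require Import ring.
Import Order.TTheory GRing.Theory Num.Theory.
Local Open Scope ring_scope.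
Set Implicit Arguments. Unset Strict Implicit.

Section IndependentSets.
Variables (R : realType) (T : finType) (e : rel T).

Lemma independent_set0 : independent e set0.
Proof. by apply/forallP => x; rewrite in_set0. Qed.

Lemma independent_set1 (u : T) : ~~ e u u -> independent e [set u].
Proof.
move=> nuu; apply/forallP => x; apply/implyP; rewrite in_set1 => /eqP ->.
by apply/forallP => y; apply/implyP; rewrite in_set1 => /eqP ->.
Qed.

Definition ind_subcomb (q : T -> R) (s : R) : Prop :=
  exists mu : {set T} -> R,
    [/\ forall I, 0 <= mu I,
        forall I, ~~ independent e I -> mu I = 0,
        \sum_(I : {set T}) mu I <= s &
        forall x, q x = \sum_(I : {set T} | x \in I) mu I].

Lemma ind_subcomb0 (q : T -> R) (s : R) :
  (forall v, q v = 0) -> 0 <= s -> ind_subcomb q s.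
Proof.
move=> q0 s0; exists (fun _ => 0); split => // [|x]; first by rewrite big1.
by rewrite q0 big1.
Qed.

Lemma ind_subcomb_eq (q q' : T -> R) (s s' : R) :
  (forall x, q x = q' x) -> s <= s' -> ind_subcomb q s -> ind_subcomb q' s'.
Proof.
move=> qq' ss' [mu [mu0 mu_ind mu_sum mu_marg]]; exists mu; split => //.
- exact: le_trans ss'.
- by move=> x; rewrite -qq'.
Qed.

Lemma ind_subcomb_add (q : T -> R) (s : R) (nu : {set T} -> R) (d : R) :
  ind_subcomb q s -> 0 <= d ->
  (forall I, 0 <= nu I) -> (forall I, ~~ independent e I -> nu I = 0) ->
  \sum_(I : {set T}) nu I = 1 ->
  ind_subcomb (fun x => q x + d * \sum_(I : {set T} | x \in I) nu I) (s + d).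
Proof.
move=> [mu [mu0 mu_ind mu_sum mu_marg]] d0 nu0 nu_ind nu_sum.
exists (fun I => mu I + d * nu I); split.
- by move=> I; rewrite addr_ge0 ?mulr_ge0.
- by move=> I nI; rewrite mu_ind // nu_ind // mulr0 addr0.
- by rewrite big_split /= -mulr_sumr nu_sum mulr1 lerD2r.
- by move=> x; rewrite big_split /= -mulr_sumr mu_marg.
Qed.

Lemma in_ind_polytope_subcomb (q : T -> R) :
  ind_subcomb q 1 -> in_ind_polytope e q.
Proof.
move=> [mu [mu0 mu_ind mu_sum mu_marg]].
pose c := 1 - \sum_(I : {set T}) mu I.
exists (fun I => mu I + (if I == set0 then c else 0)); split.
- by move=> I; rewrite addr_ge0 //; case: ifP => // _; rewrite subr_ge0.
- move=> I nI; rewrite mu_ind //; case: eqP => [I0|_]; last by rewrite addr0.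
  by move: nI; rewrite I0 independent_set0.
- by rewrite big_split /= -big_mkcond big_pred1_eq /c addrC subrK.
- move=> x; rewrite big_split /= [X in _ + X]big1 ?addr0 // => I xI.
  by case: eqP xI => // ->; rewrite in_set0.
Qed.

End IndependentSets.

Section HardCore.
Variables (R : realType) (T : finType) (e : rel T) (lam : T -> R).
Hypothesis lam_gt0 : forall v, 0 < lam v.

Lemma hc_weight_gt0 (I : {set T}) : 0 < hc_weight lam I.
Proof. exact: prodr_gt0. Qed.

Lemma hc_weight_ge0 (I : {set T}) : 0 <= hc_weight lam I.
Proof. exact/ltW/hc_weight_gt0. Qed.

Lemma hc_Z_gt0 (S : {set T}) : 0 < hc_Z e lam S.
Proof.
rewrite /hc_Z (bigD1 set0) /=; last by rewrite sub0set independent_set0.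
by rewrite ltr_pwDl ?hc_weight_gt0 ?sumr_ge0 // => I _; apply: hc_weight_ge0.
Qed.

Lemma hc_occ_ge0 (S : {set T}) (v : T) : 0 <= hc_occ e lam S v.
Proof.
rewrite divr_ge0 ?(ltW (hc_Z_gt0 S)) ?sumr_ge0 // => I _.
exact: hc_weight_ge0.
Qed.

Lemma hc_occ_gt0 (S : {set T}) (v : T) :
  ~~ e v v -> v \in S -> 0 < hc_occ e lam S v.
Proof.
move=> nvv vS; rewrite divr_gt0 ?hc_Z_gt0 //.
rewrite (bigD1 [set v]) /=; last by rewrite sub1set vS independent_set1 ?set11.
by rewrite ltr_pwDl ?hc_weight_gt0 ?sumr_ge0 // => I _; apply: hc_weight_ge0.
Qed.

Lemma hc_occ_notin (S : {set T}) (v : T) : v \notin S -> hc_occ e lam S v = 0.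
Proof.
move=> vS; rewrite /hc_occ big1 ?mul0r // => I /and3P [IS _ vI].
by move: vS; rewrite (subsetP IS _ vI).
Qed.

Definition hc_dist (S I : {set T}) : R :=
  if (I \subset S) && independent e I then hc_weight lam I / hc_Z e lam S
  else 0.

Lemma hc_dist_ge0 (S I : {set T}) : 0 <= hc_dist S I.
Proof.
rewrite /hc_dist; case: ifP => // _.
by rewrite divr_ge0 ?hc_weight_ge0 ?(ltW (hc_Z_gt0 S)).
Qed.

Lemma hc_dist_indep (S I : {set T}) : ~~ independent e I -> hc_dist S I = 0.
Proof. by move=> nI; rewrite /hc_dist (negbTE nI) andbF. Qed.

Lemma hc_dist_sum (S : {set T}) : \sum_(I : {set T}) hc_dist S I = 1.
Proof.
rewrite /hc_dist -big_mkcond /= -mulr_suml divff //.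
exact/lt0r_neq0/hc_Z_gt0.
Qed.

Lemma hc_dist_marginal (S : {set T}) (x : T) :
  \sum_(I : {set T} | x \in I) hc_dist S I = hc_occ e lam S x.
Proof.
rewrite /hc_occ mulr_suml big_mkcond [RHS]big_mkcond /=.
by apply: eq_bigr => I _; rewrite /hc_dist; case: (x \in I); rewrite ?andbT ?andbF //; case: ifP.
Qed.

End HardCore.

Section Peeling.
Variables (R : realType) (T : finType) (e : rel T) (beta gamma lam : T -> R).
Hypothesis e_irr : forall v, ~~ e v v.
Hypothesis beta_gt0 : forall v, 0 < beta v.
Hypothesis gamma_gt0 : forall v, 0 < gamma v.
Hypothesis lam_gt0 : forall v, 0 < lam v.
Hypothesis occupancy : forall S : {set T}, local_occupancy e beta gamma lam S.

Let BGA := BGA_apply e beta gamma.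

Definition pos_support (r : T -> R) : {set T} := [set v | 0 < r v].

Lemma BGA_ge0 (r : T -> R) (u : T) : (forall v, 0 <= r v) -> 0 <= BGA r u.
Proof.
move=> r0; rewrite /BGA /BGA_apply.
by rewrite addr_ge0 ?mulr_ge0 ?sumr_ge0 // ltW.
Qed.

Lemma BGA_addZ (r r' p : T -> R) (d : R) (u : T) :
  (forall v, r v = r' v + d * p v) -> BGA r u = BGA r' u + d * BGA p u.
Proof.
move=> r_eq; rewrite /BGA /BGA_apply r_eq.
rewrite (eq_bigr (fun v => r' v + d * p v)) ?big_split /= -?mulr_sumr //.
by ring.
Qed.

Lemma BGA_hc_occ_ge1 (S : {set T}) (u : T) :
  u \in S -> 1 <= BGA (hc_occ e lam S) u.
Proof.
move=> uS; apply: le_trans (occupancy uS) _; rewrite /BGA /BGA_apply.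
rewrite lerD2l ler_wpM2l ?(ltW (gamma_gt0 u)) // [leRHS](bigID (mem S)) /=.
by rewrite big_andbC lerDl sumr_ge0 // => v _; apply: hc_occ_ge0.
Qed.

Lemma BGA_peel (S : {set T}) (r : T -> R) (d : R) (u : T) : u \in S -> 0 <= d ->
  BGA (fun v => r v - d * hc_occ e lam S v) u + d <= BGA r u.
Proof.
move=> uS d0; pose p := hc_occ e lam S.
rewrite [leRHS](@BGA_addZ _ (fun v => r v - d * p v) p d) => [|v]; last first.
  by rewrite subrK.
by rewrite lerD2l -[leLHS]mulr1 ler_wpM2l ?BGA_hc_occ_ge1.
Qed.

Lemma peel_hc_occ (r : T -> R) (S : {set T}) :
  (forall v, 0 <= r v) -> {in S, forall v, 0 < r v} -> S != set0 ->
  exists2 d, 0 < d &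
    (forall v, 0 <= r v - d * hc_occ e lam S v) /\
    exists2 u, u \in S & r u - d * hc_occ e lam S u = 0.
Proof.
move=> r_ge0 r_gt0 /set0Pn [x xS]; pose p := hc_occ e lam S.
have [u uS u_min] := @arg_minP _ _ T x (mem S) (fun v => r v / p v) xS.
have pu : 0 < p u by apply: hc_occ_gt0.
exists (r u / p u); first by rewrite divr_gt0 ?r_gt0.
split; last by exists u; rewrite // divfK ?subrr ?lt0r_neq0.
move=> v; rewrite subr_ge0; have [vS|vS] := boolP (v \in S).
  by rewrite -ler_pdivlMr ?hc_occ_gt0 ?u_min.
by rewrite hc_occ_notin // mulr0.
Qed.

Lemma ind_subcomb_support0 (r : T -> R) (s : R) :
  (forall v, 0 <= r v) -> 0 <= s -> pos_support r = set0 -> ind_subcomb e r s.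
Proof.
move=> r_ge0 s_ge0 S0; apply: ind_subcomb0 => // v.
apply/eqP; rewrite eq_le r_ge0 andbT leNgt; apply/negP => rv.
have: v \in pos_support r by rewrite inE.
by rewrite S0 in_set0.
Qed.

Lemma ind_subcomb_BGA_le (n : nat) (r : T -> R) (s : R) :
  (#|pos_support r| <= n)%N -> (forall v, 0 <= r v) -> 0 <= s ->
  {in pos_support r, forall u, BGA r u <= s} -> ind_subcomb e r s.
Proof.
elim: n r s => [|n IH] r s supp_n r_ge0 s_ge0 r_le.
  by apply: ind_subcomb_support0 => //; apply/eqP; rewrite -cards_eq0 -leqn0.
set S := pos_support r in supp_n r_le *.
have [S0|SN0] := eqVneq S set0; first exact: ind_subcomb_support0.
have r_gt0 : {in S, forall v, 0 < r v} by move=> v; rewrite inE.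
have [d d_gt0 [r'_ge0 [u uS r'u0]]] := peel_hc_occ r_ge0 r_gt0 SN0.
pose r' v := r v - d * hc_occ e lam S v.
have peel v : v \in S -> BGA r' v + d <= BGA r v.
  by move=> vS; apply: BGA_peel => //; apply: ltW.
have d_le_s : d <= s.
  by apply: le_trans (r_le u uS); apply: le_trans (peel u uS); rewrite lerDr BGA_ge0.
have supp_r' : pos_support r' \proper S.
  apply/properP; split; last by exists u; rewrite // inE /r' r'u0 ltxx.
  apply/subsetP => v; rewrite !inE => /lt_le_trans; apply.
  by rewrite /r' lerBlDr lerDl mulr_ge0 ?hc_occ_ge0 // ltW.
have r'_le : {in pos_support r', forall v, BGA r' v <= s - d}.
  move=> v /(subsetP (proper_sub supp_r')) vS.
  by rewrite lerBrDr (le_trans (peel v vS)) ?r_le.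
have := IH r' (s - d) (leq_trans (proper_card supp_r') supp_n).
move=> /(_ r'_ge0 _ r'_le); rewrite subr_ge0 => /(_ d_le_s) IHr'.
have := ind_subcomb_add IHr' (ltW d_gt0) (hc_dist_ge0 e lam_gt0 S).
move=> /(_ (@hc_dist_indep _ _ e lam S) (hc_dist_sum e lam_gt0 S)).
apply: ind_subcomb_eq => [x|]; last by rewrite subrK.
by rewrite hc_dist_marginal /r' subrK.
Qed.

End Peeling.

Theorem theorem5p1 (R : realType) (T : finType) (e : rel T)
    (beta gamma lam : T -> R) :
  simple_graph e ->
  (forall v, 0 < beta v) -> (forall v, 0 < gamma v) -> (forall v, 0 < lam v) ->
  (forall S : {set T}, local_occupancy e beta gamma lam S) ->
  forall q : T -> R,
    (forall v, 0 <= q v) ->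
    (forall u, BGA_apply e beta gamma q u <= 1) ->
    in_ind_polytope e q.
Proof.
move=> [e_irr _] beta_gt0 gamma_gt0 lam_gt0 occupancy q q_ge0 q_le1.
apply: in_ind_polytope_subcomb.
apply: (ind_subcomb_BGA_le e_irr beta_gt0 gamma_gt0 lam_gt0 occupancy
  (max_card _) q_ge0 ler01) => u _.
exact: q_le1.
Qed.
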